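(* For fixed positive integers $m$ and $s$ there exist positive constants $c=c(m,s)$ and $C=C(m,s)$, independent of $n$, such that for all sufficiently large $n$, $$c\,n\le r_{\Delta}(K_{m,n};s)\le br_{\Delta}(K_{m,n};s)\le C\,n.$$
   Context: For graphs $H$ and $G$ and a positive integer $s$, write $H\xrightarrow{s} G$ if every coloring of the edges of $H$ with $s$ colors contains a monochromatic subgraph isomorphic to $G$. The degree Ramsey number is $r_{\Delta}(G;s)=\min\{\Delta(H): H\xrightarrow{s} G\}$ and the degree bipartite Ramsey number is $br_{\Delta}(G;s)=\min\{\Delta(H): H \text{ is bipartite and } H\xrightarrow{s} G\}$, where $\Delta(H)$ denotes the maximum degree of $H$. $K_{m,n}$ is the complete bipartite graph with parts of sizes $m$ and $n$. *)

From HB Require Import structures.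
From mathcomp Require Import all_boot all_order all_algebra.
From Stdlib Require Import ClassicalEpsilon.
Set Implicit Arguments. Unset Strict Implicit. Unset Printing Implicit Defensive.
Import Order.TTheory GRing.Theory Num.Theory.

Definition simple_graph (T : finType) (e : rel T) : Prop :=
  symmetric e /\ irreflexive e.

(* Maximum degree Delta(H) (0 for the empty graph). *)
Definition maxdeg (T : finType) (e : rel T) : nat :=
  \max_(v : T) #|[set w | e v w]|.

Definition bipartite (T : finType) (e : rel T) : Prop :=
  exists side : T -> bool, forall u v, e u v -> side u != side v.

(* H --s--> G : every s-colouring of the edges of H (a symmetric function on
   pairs of vertices; values on non-edges are irrelevant) contains a
   monochromatic (not necessarily induced) subgraph isomorphic to G, i.e. an
   injective vertex map phi sending every edge of G to an edge of H of one
   fixed colour c. *)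
Definition arrows (T : finType) (e : rel T) (s : nat)
    (U : finType) (g : rel U) : Prop :=
  forall col : T -> T -> 'I_s, (forall u v, col u v = col v u) ->
  exists (phi : U -> T) (c : 'I_s), injective phi /\
    forall x y, g x y -> e (phi x) (phi y) /\ col (phi x) (phi y) = c.

(* Minimum of a set of naturals (classical choice; arbitrary if no minimum). *)
Definition minnat (P : nat -> Prop) : nat :=
  epsilon (inhabits 0%N) (fun d => P d /\ forall d', P d' -> (d <= d')%N).

Definition rdeg (U : finType) (g : rel U) (s : nat) : nat :=
  minnat (fun d => exists (T : finType) (e : rel T),
            simple_graph e /\ arrows e s g /\ maxdeg e = d).

Definition brdeg (U : finType) (g : rel U) (s : nat) : nat :=
  minnat (fun d => exists (T : finType) (e : rel T),
            simple_graph e /\ bipartite e /\ arrows e s g /\ maxdeg e = d).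

Definition Kmn (m n : nat) : rel ('I_m + 'I_n)%type :=
  fun x y => match x, y with
             | inl _, inr _ => true
             | inr _, inl _ => true
             | _, _ => false
             end.

From HB Require Import structures.
From mathcomp Require Import all_boot all_order all_algebra.
From Stdlib Require Import Classical ClassicalEpsilon Wf_nat.
Set Implicit Arguments. Unset Strict Implicit.
Import Order.TTheory GRing.Theory Num.Theory.

(* Lower bound: with a single colour, H -> G forces an injective homomorphism
   of G into H, so Delta(H) >= Delta(G); since Delta(K_{m,n}) >= n, every
   graph arrowing K_{m,n} has maximum degree at least n.

   Upper bound: the complete bipartite graph K_{M,N} with M = s m and
   N = |F| n arrows K_{m,n}, where F is the (finite) set of "patterns" made of
   an injection 'I_m -> 'I_M and a colour.  Indeed each vertex j of the large
   side sees, by pigeonhole, m vertices of the small side joined to it in one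
   colour, i.e. a pattern; by pigeonhole again n such vertices j share the
   same pattern, giving a monochromatic K_{m,n}.  This host is bipartite of
   maximum degree at most M + N <= (s m + |F|) n. *)

(* Classically, every inhabited set of naturals has a least element, so
   [minnat P] is that least element. *)
Lemma minnat_spec (P : nat -> Prop) (d : nat) : P d ->
  P (minnat P) /\ forall d', P d' -> (minnat P <= d')%N.
Proof.
move=> Pd.
have [d0 [[Pd0 d0_min] _]] :=
  @dec_inh_nat_subset_has_unique_least_element P (fun n => classic (P n))
    (ex_intro _ d Pd).
have least : exists d, P d /\ forall d', P d' -> (d <= d')%N.
  by exists d0; split=> // d' /d0_min /ssrnat.leP.
exact: (epsilon_spec (inhabits 0%N) _ least).
Qed.

Lemma minnat_attained (P : nat -> Prop) (d : nat) : P d -> P (minnat P).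
Proof. by move=> /minnat_spec []. Qed.

Lemma minnat_le (P : nat -> Prop) (d : nat) : P d -> (minnat P <= d)%N.
Proof. by move=> Pd; apply: (minnat_spec Pd).2. Qed.

Section DegreeRamseyNumbers.
Variables (U : finType) (g : rel U) (s : nat).

Lemma rdeg_min (T : finType) (e : rel T) :
  simple_graph e -> arrows e s g -> (rdeg g s <= maxdeg e)%N.
Proof.
move=> simple_e arr_e.
by apply: minnat_le; exists T, e.
Qed.

Lemma rdeg_attained (T : finType) (e : rel T) :
  simple_graph e -> arrows e s g ->
  exists (T' : finType) (e' : rel T'),
    simple_graph e' /\ arrows e' s g /\ maxdeg e' = rdeg g s.
Proof.
move=> simple_e arr_e.
apply: (@minnat_attained (fun d => exists (T' : finType) (e' : rel T'),
  simple_graph e' /\ arrows e' s g /\ maxdeg e' = d) (maxdeg e)).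
by exists T, e.
Qed.

Lemma brdeg_min (T : finType) (e : rel T) :
  simple_graph e -> bipartite e -> arrows e s g -> (brdeg g s <= maxdeg e)%N.
Proof.
move=> simple_e bip_e arr_e.
by apply: minnat_le; exists T, e.
Qed.

Lemma rdeg_le_brdeg (T : finType) (e : rel T) :
  simple_graph e -> bipartite e -> arrows e s g -> (rdeg g s <= brdeg g s)%N.
Proof.
move=> simple_e bip_e arr_e.
have [T' [e' [simple_e' [_ [arr_e' <-]]]]] :
  exists (T' : finType) (e' : rel T'), simple_graph e' /\ bipartite e' /\
    arrows e' s g /\ maxdeg e' = brdeg g s.
  apply: (@minnat_attained (fun d => exists (T' : finType) (e' : rel T'),
    simple_graph e' /\ bipartite e' /\ arrows e' s g /\ maxdeg e' = d) (maxdeg e)).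
  by exists T, e.
exact: rdeg_min.
Qed.

End DegreeRamseyNumbers.

(* Arrowing with s > 0 colours yields (via a constant colouring) an injective
   homomorphism, hence the host has maximum degree at least that of g. *)
Lemma maxdeg_arrows (T U : finType) (e : rel T) (g : rel U) (s : nat) :
  (0 < s)%N -> arrows e s g -> (maxdeg g <= maxdeg e)%N.
Proof.
move=> s_gt0 arr_e.
have [phi [c0 [phi_inj phi_hom]]] := arr_e (fun _ _ => Ordinal s_gt0) (fun _ _ => erefl).
apply/bigmax_leqP => x _; apply: leq_trans (leq_bigmax (phi x)).
rewrite -(card_imset _ phi_inj); apply/subset_leq_card/subsetP => w /imsetP [y].
by rewrite !inE => /phi_hom [e_xy _] ->.
Qed.

Lemma Kmn_maxdeg_ge (m n : nat) : (0 < m)%N -> (n <= maxdeg (@Kmn m n))%N.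
Proof.
move=> m_gt0; apply: leq_trans (leq_bigmax (inl (Ordinal m_gt0))).
rewrite -[n in (n <= _)%N]card_ord -(card_imset _ (@inr_inj 'I_m 'I_n)).
by apply/subset_leq_card/subsetP => w /imsetP [y _ ->]; rewrite inE.
Qed.

Lemma maxdeg_le_card (T : finType) (e : rel T) : (maxdeg e <= #|T|)%N.
Proof. by apply/bigmax_leqP => v _; apply: max_card. Qed.

Lemma Kmn_maxdeg_le (M N : nat) : (maxdeg (@Kmn M N) <= M + N)%N.
Proof. by apply: leq_trans (maxdeg_le_card _) _; rewrite card_sum !card_ord. Qed.

Lemma Kmn_simple (m n : nat) : simple_graph (@Kmn m n).
Proof. by split; [case=> x; case=> y | case]. Qed.

Lemma Kmn_bipartite (m n : nat) : bipartite (@Kmn m n).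
Proof. by exists (fun x => if x is inl _ then true else false); case=> x; case. Qed.

Lemma pigeonhole (A B : finType) (f : A -> B) (k : nat) :
  (#|B| * k.-1 < #|A|)%N ->
  exists (b : B) (h : 'I_k -> A), injective h /\ forall i, f (h i) = b.
Proof.
move=> big_A.
have [b fibre_b] : exists b, (k <= #|[set a | f a == b]|)%N.
  apply: NNPP => no_big_fibre; move: big_A; rewrite ltnNge => /negP; apply.
  have -> : #|A| = (\sum_(b : B) #|[set a | f a == b]|)%N.
    rewrite -sum1_card (partition_big f predT) //=; apply: eq_bigr => b _.
    by rewrite -sum1_card; apply: eq_bigl => a; rewrite inE.
  rewrite -sum_nat_const; apply: leq_sum => b _.
  case: k no_big_fibre => [|k] no_big_fibre; first by case: no_big_fibre; exists b.
  by rewrite -ltnS ltnNge; apply/negP => big; apply: no_big_fibre; exists b.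
exists b, (fun i => enum_val (widen_ord fibre_b i)); split.
  by move=> i j /enum_val_inj/(congr1 val) /= ij; apply: val_inj.
by move=> i; have := enum_valP (widen_ord fibre_b i); rewrite inE => /eqP.
Qed.

Section HostGraph.
Variables (m s : nat).
Hypotheses (m_gt0 : (0 < m)%N) (s_gt0 : (0 < s)%N).

(* A pattern is a map from 'I_m into the (s m)-side together with a colour;
   an injective pattern describes a monochromatic star K_{m,1} centred at a
   vertex of the other side. *)
Definition pattern : finType := ({ffun 'I_m -> 'I_(s * m)} * 'I_s)%type.

Lemma pattern_card_gt0 : (0 < #|{: pattern}|)%N.
Proof. by rewrite card_prod card_ffun !card_ord !muln_gt0 expn_gt0 muln_gt0 m_gt0 s_gt0. Qed.

Lemma host_arrows (n : nat) : (0 < n)%N ->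
  arrows (@Kmn (s * m) (#|{: pattern}| * n)) s (@Kmn m n).
Proof.
move=> n_gt0 col col_sym.
pose fits j (p : pattern) :=
  injectiveb p.1 && [forall i, col (inl (p.1 i)) (inr j) == p.2].
(* Every vertex j of the large side is the centre of a monochromatic star. *)
have column_pattern j : exists p, fits j p.
  have many_rows : (#|{: 'I_s}| * m.-1 < #|{: 'I_(s * m)}|)%N.
    by rewrite !card_ord ltn_pmul2l // ltn_predL.
  have [c [h [h_inj h_col]]] :=
    pigeonhole (fun x : 'I_(s * m) => col (inl x) (inr j)) many_rows.
  exists ([ffun i => h i], c); apply/andP; split.
    by apply/injectiveP => i1 i2; rewrite !ffunE => /h_inj.
  by apply/forallP => i; rewrite ffunE h_col.
pose pat j := xchoose (column_pattern j).
(* n vertices of the large side share the same pattern (g, c). *)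
have many_columns : (#|{: pattern}| * n.-1 < #|{: 'I_(#|{: pattern}| * n)}|)%N.
  by rewrite card_ord ltn_pmul2l ?ltn_predL ?pattern_card_gt0.
have [[g c] [h [h_inj h_pat]]] := pigeonhole pat many_columns.
have fits_g k : fits (h k) (g, c) by rewrite -(h_pat k); apply: xchooseP.
have g_inj : injective g.
  by case/andP: (fits_g (Ordinal n_gt0)) => /injectiveP.
have g_col i k : col (inl (g i)) (inr (h k)) = c.
  by case/andP: (fits_g k) => _ /forallP /(_ i) /eqP.
exists (fun x => match x with inl i => inl (g i) | inr k => inr (h k) end), c.
split.
  by case=> [i|k] [j|l] //= [] => [/g_inj | /h_inj] ->.
by case=> [i|k] [j|l] //= _; split; rewrite // col_sym.
Qed.

End HostGraph.

Local Open Scope ring_scope.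

Theorem theorem3 (m s : nat) : (0 < m)%N -> (0 < s)%N ->
  exists (c C : rat), 0 < c /\ 0 < C /\
    exists N : nat, forall n : nat, (N <= n)%N ->
      c * n%:R <= (rdeg (@Kmn m n) s)%:R /\
      (rdeg (@Kmn m n) s <= brdeg (@Kmn m n) s)%N /\
      (brdeg (@Kmn m n) s)%:R <= C * n%:R.
Proof.
move=> m_gt0 s_gt0.
exists 1, (s * m + #|{: pattern m s}|)%:R; split; first exact: ltr01.
split; first by rewrite ltr0n addn_gt0 (pattern_card_gt0 m_gt0 s_gt0) orbT.
exists 1%N => n n_gt0.
have host_simple := Kmn_simple (s * m) (#|{: pattern m s}| * n).
have host_bip := Kmn_bipartite (s * m) (#|{: pattern m s}| * n).
have host_arr := host_arrows m_gt0 s_gt0 n_gt0.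
have [T [e [_ [arr_e deg_e]]]] := rdeg_attained host_simple host_arr.
split; [|split].
- rewrite mul1r ler_nat -deg_e.
  exact: leq_trans (Kmn_maxdeg_ge n m_gt0) (maxdeg_arrows s_gt0 arr_e).
- exact: rdeg_le_brdeg host_simple host_bip host_arr.
- rewrite -natrM ler_nat mulnDl.
  apply: leq_trans (brdeg_min host_simple host_bip host_arr) _.
  by apply: leq_trans (Kmn_maxdeg_le _ _) _; rewrite leq_add2r leq_pmulr.
Qed.
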